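(* Let $(X,d_X)$ be a compact metric space, let $(\phi_j)_{j\in\mathbb{N}}$ be maps $\phi_j:X\to X$ for which there is $0<\gamma<1$ with $d_X(\phi_j(x_1),\phi_j(x_2))\le \gamma\, d_X(x_1,x_2)$ for all $j\in\mathbb{N}$ and $x_1,x_2\in X$, and let $(q_j)_{j\in\mathbb{N}}$ be real numbers with $q_j\le 0$ for all $j$ and $\sup_{j\in\mathbb{N}} q_j=0$. For $\mu\in I(X)$ and $f\in C(X,\mathbb{R})$ put $$\Lambda_\mu(f):=\lim_{n\to\infty}\ \max_{1\le j\le n} I_j(\mu)(f),\qquad I_j(\mu)(f):=q_j+\mu(f\circ\phi_j).$$ Then this limit exists for every $f\in C(X,\mathbb{R})$, $\Lambda_\mu(f)=\sup_{j\in\mathbb{N}} I_j(\mu)(f)$, and the functional $\Lambda_\mu$ belongs to $I(X)$.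
   Context: Max-plus notation: $a\oplus b=\max(a,b)$, $a\odot b=a+b$ on $\mathbb{R}\cup\{-\infty\}$. $C(X,\mathbb{R})$ is the set of continuous real functions on $X$, with $(a\odot f)(x)=a+f(x)$ and $(f\oplus g)(x)=\max(f(x),g(x))$. A functional $m:C(X,\mathbb{R})\to\mathbb{R}$ is max-plus linear if $m(a+f)=a+m(f)$ for all $a\in\mathbb{R}$, $f\in C(X,\mathbb{R})$, and $m(\max(f,g))=\max(m(f),m(g))$ for all $f,g$. $I(X)$ (idempotent probabilities) is the set of max-plus linear functionals $m$ with $m(0)=0$. *)

From HB Require Import structures.
From mathcomp Require Import all_boot all_order all_algebra.
From mathcomp Require Import all_classical all_reals all_analysis.
Set Implicit Arguments. Unset Strict Implicit. Unset Printing Implicit Defensive.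
Import Order.TTheory GRing.Theory Num.Theory.
Import numFieldNormedType.Exports.
Local Open Scope classical_set_scope.
Local Open Scope ring_scope.

(* A functional on C(X,R) is represented as a map (X -> R) -> R whose values
   are only constrained on continuous functions. *)

Definition maxplus_linear (R : realType) (X : topologicalType)
  (m : (X -> R) -> R) : Prop :=
  (forall (a : R) (f : X -> R), continuous f ->
      m (fun x => a + f x) = a + m f) /\
  (forall f g : X -> R, continuous f -> continuous g ->
      m (fun x => Num.max (f x) (g x)) = Num.max (m f) (m g)).

Definition idem_prob (R : realType) (X : topologicalType)
  (m : (X -> R) -> R) : Prop :=
  maxplus_linear m /\ m (fun _ => 0) = 0.

(* I_j(mu)(f) = q_j + mu (f o phi_j); indices j : nat stand for 1,2,3,... *)
Definition Ij (R : realType) (X : topologicalType) (q : nat -> R)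
  (phi : nat -> X -> X) (mu : (X -> R) -> R) (j : nat) (f : X -> R) : R :=
  q j + mu (f \o phi j).

(* max_{1 <= j <= n+1} I_j(mu)(f)  (shifted: index j : nat stands for j+1) *)
Definition Imax (R : realType) (X : topologicalType) (q : nat -> R)
  (phi : nat -> X -> X) (mu : (X -> R) -> R) (f : X -> R) (n : nat) : R :=
  \big[Num.max/Ij q phi mu 0%N f]_(j < n.+1) Ij q phi mu j f.

Definition Lambda (R : realType) (X : topologicalType) (q : nat -> R)
  (phi : nat -> X -> X) (mu : (X -> R) -> R) (f : X -> R) : R :=
  limn (Imax q phi mu f).

From HB Require Import structures.
From mathcomp Require Import all_boot all_order all_algebra.
From mathcomp Require Import all_classical all_reals all_analysis.
Import Order.TTheory GRing.Theory Num.Theory.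
Import numFieldNormedType.Exports.
Local Open Scope classical_set_scope.
Local Open Scope ring_scope.

(* Each I_j(mu) is max-plus linear: it is mu precomposed with the continuous
   map phi_j and translated by q_j.  On a continuous f its values are bounded
   by any upper bound of f because q_j <= 0, so the prefix maxima increase to
   sup_j I_j(mu)(f).  A bounded supremum of max-plus linear functionals is
   again max-plus linear, since sup commutes with adding a constant and with
   binary max; and Lambda_mu(0) = sup_j q_j = 0. *)

Lemma mdist_lipschitz_continuous {R : realType} {X Y : metricType R}
    [g : X -> Y] [k : R] :
  (forall x1 x2, mdist (g x1) (g x2) <= k * mdist x1 x2) -> continuous g.
Proof.
move=> g_lip x; apply/cvg_ballP => e e_gt0.
have k1_gt0 : 0 < Num.max k 1 by rewrite lt_max ltr01 orbT.
apply/nbhs_ballP; exists (e / Num.max k 1) => [|y]; first exact: divr_gt0.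
rewrite /= !ballEmdist /= ltr_pdivlMr // => xy_lt.
apply: le_lt_trans (g_lip _ _) _; apply: le_lt_trans xy_lt; rewrite mulrC.
by rewrite ler_wpM2l ?mdist_ge0 // le_max lexx.
Qed.

Lemma compact_continuous_has_ubound {R : realType} {X : topologicalType}
    [f : X -> R] :
  compact [set: X] -> continuous f -> has_ubound (range f).
Proof.
move=> cX cf; apply: (bounded_fun_has_ubound (a := f : X -> R^o)).
have := compact_bounded (continuous_compact (continuous_subspaceT cf) cX).
exact: filterS (fun M fM x _ => fM (f x) (imageT _ x)).
Qed.

Section SupRange.
Context {R : realType} {I : pointedType}.
Implicit Types u v w : I -> R.

Lemma sup_range_addl u a : has_ubound (range u) ->
  sup (range (fun i => a + u i)) = a + sup (range u).
Proof.
move=> u_ub; rewrite -[in RHS](sup1 a) -sup_sumE; last 2 first.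
- by split; [exists a | exists a => _ ->].
- by split=> //; exists (u point), point.
congr sup; apply/seteqP; split => [_ [i _ <-]|_ [_ -> [_ [i _ <-] <-]]].
  by exists a => //; exists (u i) => //; exists i.
by exists i.
Qed.

Lemma sup_range_max u v : has_ubound (range u) -> has_ubound (range v) ->
  sup (range (fun i => Num.max (u i) (v i))) =
  Num.max (sup (range u)) (sup (range v)).
Proof.
move=> u_ub v_ub; have range_ne w : range w !=set0 by exists (w point), point.
have le_sup w i : has_ubound (range w) -> w i <= sup (range w).
  by move=> w_ub; apply: ub_le_sup => //; exists i.
have uv_ub : has_ubound (range (fun i => Num.max (u i) (v i))).
  exists (Num.max (sup (range u)) (sup (range v))) => _ [i _ <-].
  exact: le_max2 (le_sup _ i u_ub) (le_sup _ i v_ub).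
apply/le_anti/andP; split.
  apply: ge_sup (range_ne _) _ => _ [i _ <-].
  exact: le_max2 (le_sup _ i u_ub) (le_sup _ i v_ub).
rewrite ge_max; apply/andP; split; apply: ge_sup (range_ne _) _ => _ [i _ <-];
  by apply: le_trans (le_sup _ i uv_ub); rewrite le_max lexx ?orbT.
Qed.

End SupRange.

Lemma bigmax_prefix_cvg_sup {R : realType} [u : nat -> R] :
  has_ubound (range u) ->
  (fun n => \big[Num.max/u 0%N]_(j < n.+1) u j) @ \oo --> sup (range u).
Proof.
move=> u_ub; set v := fun n => _.
have le_sup j : u j <= sup (range u) by apply: ub_le_sup => //; exists j.
have v_le n : v n <= sup (range u) by apply: bigmax_le => [|j _]; exact: le_sup.
have le_v j : u j <= v j by rewrite /v (bigD1 (@ord_max j)) //= le_max lexx.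
have v_ub : has_ubound (range v) by exists (sup (range u)) => _ [n _ <-].
have v_nd : nondecreasing_seq v.
  by apply/nondecreasing_seqP => n; exact: (le_bigmax_ord xpredT u (leqnSn n.+1)).
have -> : sup (range u) = sup (range v).
  apply/le_anti/andP; split.
    apply: ge_sup; first by exists (u 0%N), 0%N.
    move=> _ [j _ <-]; apply: le_trans (le_v j) _.
    by apply: ub_le_sup => //; exists j.
  by apply: ge_sup; [exists (v 0%N), 0%N | move=> _ [n _ <-]; exact: v_le].
exact: nondecreasing_cvgn v_nd v_ub.
Qed.

Section MaxPlusLinear.
Context {R : realType} {X Y : topologicalType}.
Implicit Types (m : (X -> R) -> R) (f g : X -> R).

Lemma maxplus_linear_le [m f g] : maxplus_linear m ->
  continuous f -> continuous g -> (forall x, f x <= g x) -> m f <= m g.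
Proof.
move=> [_ m_max] cf cg fg.
have -> : g = (fun x => Num.max (f x) (g x)) by apply/funext => x; rewrite max_r.
by rewrite m_max // le_max lexx.
Qed.

Lemma idem_prob_cst [m] c : idem_prob m -> m (fun=> c) = c.
Proof.
move=> [[m_add _] m0].
have -> : (fun=> c) = (fun x : X => c + 0) by apply/funext => x; rewrite addr0.
by rewrite m_add ?m0 ?addr0 //; exact: cst_continuous.
Qed.

Lemma idem_prob_le_ub m f M : idem_prob m ->
  continuous f -> (forall x, f x <= M) -> m f <= M.
Proof.
move=> m_ip cf fM; rewrite -[leRHS](idem_prob_cst M m_ip).
apply: maxplus_linear_le m_ip.1 cf _ fM; exact: cst_continuous.
Qed.

Lemma maxplus_linear_addl [m] c : maxplus_linear m ->
  maxplus_linear (fun f => c + m f).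
Proof.
move=> [m_add m_max]; split => [a f cf|f g cf cg].
  by rewrite m_add // addrCA.
by rewrite m_max // addr_maxr.
Qed.

Lemma maxplus_linear_comp [m] [h : X -> Y] : maxplus_linear m -> continuous h ->
  maxplus_linear (fun f : Y -> R => m (f \o h)).
Proof.
move=> [m_add m_max] ch.
have comp_cont (f : Y -> R) : continuous f -> continuous (f \o h).
  by move=> cf x; exact: continuous_comp (ch x) (cf (h x)).
split => [a f cf|f g cf cg]; first exact: m_add a _ (comp_cont f cf).
exact: m_max _ _ (comp_cont f cf) (comp_cont g cg).
Qed.

Lemma maxplus_linear_sup [I : pointedType] [m : I -> (X -> R) -> R] :
  (forall i, maxplus_linear (m i)) ->
  (forall f, continuous f -> has_ubound (range (fun i => m i f))) ->
  maxplus_linear (fun f => sup (range (fun i => m i f))).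
Proof.
move=> m_lin m_ub; split => [a f cf|f g cf cg].
  rewrite -sup_range_addl; last exact: m_ub.
  by congr sup; congr image; apply/funext => i; exact: (m_lin i).1.
rewrite -sup_range_max; [|exact: m_ub..].
by congr sup; congr image; apply/funext => i; exact: (m_lin i).2.
Qed.

Lemma maxplus_linear_eq_continuous [m1 m2] :
  (forall f, continuous f -> m1 f = m2 f) ->
  maxplus_linear m2 -> maxplus_linear m1.
Proof.
move=> m12 [m_add m_max]; split => [a f cf|f g cf cg].
  have caf : continuous (fun x => a + f x).
    by move=> x; apply: cvgD; [exact: cvg_cst | exact: cf].
  by rewrite !m12 //; exact: m_add.
have cfg : continuous (fun x => Num.max (f x) (g x)).
  by move=> x; exact: continuous_max (cf x) (cg x).
by rewrite !m12 //; exact: m_max.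
Qed.

End MaxPlusLinear.

Theorem lemma2p7 (R : realType) (X : metricType R)
  (phi : nat -> X -> X) (gamma : R) (q : nat -> R) (mu : (X -> R) -> R) :
  compact [set: X] ->
  0 < gamma -> gamma < 1 ->
  (forall (j : nat) (x1 x2 : X),
      mdist (phi j x1) (phi j x2) <= gamma * mdist x1 x2) ->
  (forall j : nat, q j <= 0) ->
  sup (range q) = 0 ->
  idem_prob mu ->
  (forall f : X -> R, continuous f ->
     cvgn (Imax q phi mu f) /\
     Lambda q phi mu f = sup (range (fun j => Ij q phi mu j f))) /\
  idem_prob (Lambda q phi mu).
Proof.
move=> cX _ _ phi_lip q_le0 sup_q mu_ip.
have cphi j : continuous (phi j) := mdist_lipschitz_continuous (phi_lip j).
have Ij_lin j : maxplus_linear (Ij q phi mu j).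
  exact: maxplus_linear_addl (q j) (maxplus_linear_comp mu_ip.1 (cphi j)).
have Ij_ub f : continuous f -> has_ubound (range (fun j => Ij q phi mu j f)).
  move=> cf; have [M fM] := compact_continuous_has_ubound cX cf.
  exists M => _ [j _ <-]; rewrite /Ij -[leRHS]add0r lerD //.
  apply: idem_prob_le_ub mu_ip _ (fun x => fM _ (imageT _ _)).
  by move=> x; exact: continuous_comp (cphi j x) (cf _).
have Imax_cvg f : continuous f ->
    Imax q phi mu f @ \oo --> sup (range (fun j => Ij q phi mu j f)).
  by move=> cf; exact: bigmax_prefix_cvg_sup (Ij_ub f cf).
have LambdaE f : continuous f ->
    Lambda q phi mu f = sup (range (fun j => Ij q phi mu j f)).
  by move=> cf; exact: cvg_lim (Imax_cvg f cf).
split => [f cf|]; first by split; [exact: cvgP (Imax_cvg f cf) | exact: LambdaE].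
split; first exact: maxplus_linear_eq_continuous LambdaE
  (maxplus_linear_sup Ij_lin Ij_ub).
rewrite LambdaE; last exact: cst_continuous.
rewrite -[RHS]sup_q; congr sup; congr image.
by apply/funext => j; rewrite /Ij idem_prob_cst ?addr0.
Qed.
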